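(* Let $t_1,\dots,t_d$ be positive integers with $t_i\le n_i$ for all $i$ and $t_1=t_2t_3\cdots t_d$. Then $G$ acts transitively on the set $\Lambda_{t_1\dots t_d}=\mathrm{mrank}^{-1}(t_1,\dots,t_d)$ of tensors in $V$ of multilinear rank $(t_1,\dots,t_d)$; in particular $\Lambda_{t_1\dots t_d}=G\cdot T$ with $$T=\sum_{\beta_2=1}^{t_2}\cdots\sum_{\beta_d=1}^{t_d} e_1^{\iota(\beta_2,\dots,\beta_d)}\otimes e_2^{\beta_2}\otimes\cdots\otimes e_d^{\beta_d}.$$
   Context: Fix integers $d\ge 3$ and $n_1,\dots,n_d\ge 2$. $V=\mathbb{R}^{n_1}\otimes\cdots\otimes\mathbb{R}^{n_d}$, and $G=\mathrm{GL}(n_1)\times\cdots\times\mathrm{GL}(n_d)$ acts on $V$ by $(g_1,\dots,g_d)\cdot(v_1\otimes\cdots\otimes v_d)=(g_1v_1)\otimes\cdots\otimes(g_dv_d)$, extended linearly. $e_i^1,\dots,e_i^{n_i}$ is the standard basis of $\mathbb{R}^{n_i}$. The multilinear rank of $T\in V$ is $(t_1,\dots,t_d)$ where $t_i$ is the rank of $T$ viewed as a linear map $\mathbb{R}^{n_i}\to\bigotimes_{j\ne i}\mathbb{R}^{n_j}$. $\iota:[t_2]\times\cdots\times[t_d]\to[t_1]$ is the lexicographic bijection with $\beta_2$ most significant (the ordering for which the Kronecker product satisfies $(A_2\otimes\cdots\otimes A_d)_{\iota(\beta),\iota(\gamma)}=\prod_{i}(A_i)_{\beta_i\gamma_i}$).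 *)

From HB Require Import structures.
From mathcomp Require Import all_boot all_order all_algebra.
From mathcomp Require Export Rstruct.
Set Implicit Arguments. Unset Strict Implicit. Unset Printing Implicit Defensive.
Import Order.TTheory GRing.Theory Num.Theory.
Local Open Scope ring_scope.

Section Tensors.
Variable (F : fieldType) (d : nat) (n : 'I_d -> nat).

Definition idx := {dffun forall k : 'I_d, 'I_(n k)}.
(* tensors in V = R^{n_1} (x) ... (x) R^{n_d}, given by their coordinates
   in the basis e_1^{j_1} (x) ... (x) e_d^{j_d} *)
Definition tensor := {ffun idx -> F}.

Definition oidx (i : 'I_d) := {dffun forall k : {k : 'I_d | k != i}, 'I_(n (val k))}.

Definition glue (i : 'I_d) (a : 'I_(n i)) (c : oidx i) : idx :=
  @finfun _ (fun k => 'I_(n k))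
    (fun k => match k =P i return 'I_(n k) with
              | ReflectT e => ecast j 'I_(n j) (esym e) a
              | ReflectF ne => c (exist _ k (introN eqP ne))
              end).

(* matrix of T viewed as a linear map R^{n_i} -> (x)_{k<>i} R^{n_k}
   (rows: basis e_i^a of R^{n_i}, columns: basis of the other factors) *)
Definition flattening (T : tensor) (i : 'I_d) : 'M[F]_(n i, #|{: oidx i}|) :=
  \matrix_(a, c) T (glue a (enum_val c)).

Definition mrank (T : tensor) (i : 'I_d) : nat := \rank (flattening T i).

(* elements of G = GL(n_1) x ... x GL(n_d) *)
Definition gtuple := forall i : 'I_d, 'M[F]_(n i).
Definition inG (g : gtuple) : Prop := forall i, g i \in unitmx.

(* (g_1,...,g_d).T : linear extension of v_1(x)..(x)v_d |-> g_1 v_1 (x)..(x) g_d v_d *)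
Definition act (g : gtuple) (T : tensor) : tensor :=
  [ffun j : idx => \sum_(k : idx) (\prod_(i < d) g i (j i) (k i)) * T k].

(* lexicographic bijection iota, beta_2 most significant (0-based indices);
   mode 1 is the ordinal with value 0 *)
Definition iota_lex (t : 'I_d -> nat) (j : idx) : nat :=
  (\sum_(k : 'I_d | (0 < val k)%N) val (j k) * \prod_(l : 'I_d | (val k < val l)%N) t l)%N.

(* T = sum_beta e_1^{iota(beta)} (x) e_2^{beta_2} (x) ... (x) e_d^{beta_d} *)
Definition Tstd (t : 'I_d -> nat) : tensor :=
  [ffun j : idx => if [forall k : 'I_d, if val k == 0%N then val (j k) == iota_lex t j
                                         else (val (j k) < t k)%N] then 1 else 0].

End Tensors.

From HB Require Import structures.
From mathcomp Require Import all_boot all_order all_algebra.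
Set Implicit Arguments. Unset Strict Implicit. Unset Printing Implicit Defensive.
Import Order.TTheory GRing.Theory Num.Theory.
Local Open Scope ring_scope.

(* Flattening along mode [i] turns the action into [X |-> g_i X K], with [K]
   the Kronecker product of the other factors, so the multilinear rank is
   G-invariant.  Conversely, let [T] have multilinear rank [t].  Multiplying
   every mode by the inverse of a column echelon basis of its flattening kills
   each entry with some [j_k >= t_k], so the reduced tensor lives on the box
   [j_k < t_k] (k >= 2), whose [t_2 ... t_d = t_1] columns are numbered by
   [iota].  Its mode-1 flattening is therefore [A P], with [P] selecting the
   box columns and [A] an [n_1 x t_1] matrix of rank [t_1], while that of
   [Tstd] is [I P] with [I = pid_mx t_1].  Completing [A] to an invertible
   [g_1] exhibits the reduced tensor as [g_1 . Tstd]. *)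

Lemma bigA_distr_dffun (R : comNzRingType) (I : finType) (T_ : I -> finType)
    (F : forall i, T_ i -> R) :
  \sum_(k : {dffun forall i : I, T_ i}) \prod_(i : I) F i (k i) =
  \prod_(i : I) \sum_(x : T_ i) F i x.
Proof.
pose P_ i := [ffun x : T_ i => F i x].
transitivity (\prod_(i : I) \sum_(x : T_ i) P_ i x); last first.
  by apply: eq_bigr => i _; apply: eq_bigr => x _; rewrite ffunE.
rewrite (eq_bigr (fun i => \sum_(j in tagged_with T_ i) untag 0 (P_ i) j)); last first.
  by move=> i _; exact: (big_tag (fun i x => P_ i x) i).
rewrite bigA_distr_big_dep -big_fprod.
rewrite (reindex (@dffun_of_fprod I T_)); last exact/onW_bij/dffun_of_fprod_bij.
by apply: eq_bigr => k _; apply: eq_bigr => i _; rewrite !ffunE.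
Qed.

Lemma mxrank_mxsub (F : fieldType) m n m' n' (f : 'I_m' -> 'I_m) (g : 'I_n' -> 'I_n)
    (A : 'M[F]_(m, n)) :
  (\rank (mxsub f g A) <= \rank A)%N.
Proof.
have -> : mxsub f g A = rowsub f 1%:M *m (A *m colsub g 1%:M).
  by rewrite mulmx_colsub mulmx1 mul_rowsub_mx mul1mx; apply/matrixP => i j; rewrite !mxE.
by rewrite (leq_trans (mxrankM_maxr _ _)) ?mxrankM_maxl.
Qed.

Lemma mxrank_le_zero_rows (F : fieldType) m n (A : 'M[F]_(m, n)) r :
  (forall (a : 'I_m) (c : 'I_n), (r <= a)%N -> A a c = 0) -> (\rank A <= r)%N.
Proof.
have [lerm|ltmr] := leqP r m; last first.
  by move=> _; rewrite (leq_trans (rank_leq_row A)) // ltnW.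
move=> A0; have -> : A = pid_mx r *m A.
  apply/matrixP => a c; rewrite mxE (bigD1 a) //= big1 => [|b nba]; last first.
    by rewrite mxE; case: eqP => [/ord_inj ab|]; [rewrite ab eqxx in nba | rewrite mul0r].
  rewrite mxE eqxx addr0; have [ltar|lera] := ltnP a r; first by rewrite mul1r.
  by rewrite mul0r A0.
by rewrite (leq_trans (mxrankM_maxl _ _)) // rank_pid_mx.
Qed.

Lemma col_full_pid_mx (F : fieldType) m r (A : 'M[F]_(m, r)) :
  \rank A = r -> exists2 g : 'M[F]_m, g \in unitmx & A = g *m pid_mx r.
Proof.
move=> rkA; have lerm : (r <= m)%N by rewrite -rkA rank_leq_row.
pose U : 'M[F]_(r, m) := pid_mx r.
have UA : U *m (pid_mx r *m A^T) = A^T by rewrite mulmxA pid_mx_id // pid_mx_1 mul1mx.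
have rkU : \rank (U *m (pid_mx r *m A^T)) = \rank U by rewrite UA mxrank_tr rank_pid_mx.
have [g gU Eg] := complete_unitmx rkU.
exists g^T; first by rewrite unitmx_tr.
by apply: trmx_inj; rewrite trmx_mul trmxK tr_pid_mx -Eg.
Qed.

Lemma pid_mx_mul_row0 (F : fieldType) m n p r (Y : 'M[F]_(n, p)) (a : 'I_m) c :
  (r <= a)%N -> ((pid_mx r : 'M_(m, n)) *m Y) a c = 0.
Proof.
move=> lera; rewrite mxE big1 // => b _.
by rewrite mxE leqNgt in lera *; rewrite (negbTE lera) andbF mul0r.
Qed.

Lemma reflect_match_true (P : Prop) b (r : reflect P b) (T : Type)
    (f : P -> T) (g : ~ P -> T) (p : P) :
  (forall x y : P, f x = f y) ->
  match r with ReflectT e => f e | ReflectF ne => g ne end = f p.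
Proof. by case: r => [e|ne] fP; [apply: fP | case: ne]. Qed.

Lemma reflect_match_false (P : Prop) b (r : reflect P b) (T : Type)
    (f : P -> T) (g : ~ P -> T) (np : ~ P) :
  (forall x y : ~ P, g x = g y) ->
  match r with ReflectT e => f e | ReflectF ne => g ne end = g np.
Proof. by case: r => [e|ne] gP; [case: np | apply: gP]. Qed.

Section MixedRadix.
Variables (d : nat) (t : 'I_d -> nat).
Hypothesis t_gt0 : forall k, (0 < t k)%N.
Local Open Scope nat_scope.

Definition radix m := \prod_(l : 'I_d | m <= l) t l.
Definition mixval (f : 'I_d -> nat) m := \sum_(l : 'I_d | m <= l) f l * radix l.+1.
Definition digit b (l : 'I_d) := b %/ radix l.+1 %% t l.

Lemma downward_ind (P : nat -> Prop) :
  (forall m, d <= m -> P m) -> (forall m, m < d -> P m.+1 -> P m) -> forall m, P m.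
Proof.
move=> Pge PS m; move Er: (d - m) => r; elim: r m Er => [|r IHr] m Er.
  by apply: Pge; rewrite -subn_eq0 Er.
have ltmd : m < d by rewrite -subn_gt0 Er.
by apply: PS => //; apply: IHr; rewrite subnS Er.
Qed.

Lemma big_geq_split (R : Type) (idx : R) (op : Monoid.com_law idx)
    (G : 'I_d -> R) m (ltmd : m < d) :
  \big[op/idx]_(l : 'I_d | m <= l) G l =
  op (G (Ordinal ltmd)) (\big[op/idx]_(l : 'I_d | m.+1 <= l) G l).
Proof.
rewrite (bigD1 (Ordinal ltmd)) //=; congr (op _ _); apply: eq_bigl => l.
by rewrite -val_eqE /= ltn_neqAle eq_sym andbC.
Qed.

Lemma big_geq_nil (R : Type) (idx : R) (op : R -> R -> R) (G : 'I_d -> R) m :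
  d <= m -> \big[op/idx]_(l : 'I_d | m <= l) G l = idx.
Proof.
by move=> ledm; rewrite big_pred0 // => l; apply/negbTE; rewrite -ltnNge (leq_trans _ ledm).
Qed.

Lemma radixS m (ltmd : m < d) : radix m = t (Ordinal ltmd) * radix m.+1.
Proof. exact: big_geq_split. Qed.

Lemma mixvalS f m (ltmd : m < d) :
  mixval f m = f (Ordinal ltmd) * radix m.+1 + mixval f m.+1.
Proof. exact: big_geq_split. Qed.

Lemma radix_gt0 m : 0 < radix m.
Proof. by rewrite prodn_gt0. Qed.

Lemma radix_dvd m k : m <= k -> radix k %| radix m.
Proof.
elim/downward_ind: m => [m ledm lemk|m ltmd IHm lemk].
  by rewrite /radix big_geq_nil ?dvd1n // (leq_trans ledm lemk).
case: (ltnP m k) => [ltmk|lekm]; last by rewrite (@anti_leq k m) ?lekm.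
by rewrite (radixS ltmd) dvdn_mull // IHm.
Qed.

Lemma mixval_lt_radix f m :
  (forall l : 'I_d, m <= l -> f l < t l) -> mixval f m < radix m.
Proof.
elim/downward_ind: m => [m ledm _|m ltmd IHm flt].
  by rewrite /mixval /radix !big_geq_nil.
rewrite (mixvalS f ltmd) (radixS ltmd).
have ltf : f (Ordinal ltmd) < t (Ordinal ltmd) by apply: flt.
have ltv : mixval f m.+1 < radix m.+1 by apply: IHm => l /ltnW; apply: flt.
apply: (@leq_trans (f (Ordinal ltmd) * radix m.+1 + radix m.+1)).
  by rewrite ltn_add2l.
by rewrite -mulSnr leq_mul2r ltf orbT.
Qed.

Lemma modn_mul_decomp x a b : x %% (a * b) = (x %/ b %% a) * b + x %% b.
Proof.
by rewrite modn_divl {1}(divn_eq (x %% (a * b)) b) (modn_dvdm _ (dvdn_mull a (dvdnn b))).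
Qed.

Lemma mixval_digit b m : mixval (digit b) m = b %% radix m.
Proof.
elim/downward_ind: m => [m ledm|m ltmd IHm].
  by rewrite /mixval /radix !big_geq_nil ?modn1.
by rewrite (mixvalS _ ltmd) IHm (radixS ltmd) modn_mul_decomp.
Qed.

Lemma mixval_split f m k : m <= k -> exists q, mixval f m = q * radix k + mixval f k.
Proof.
elim/downward_ind: m => [m ledm lemk|m ltmd IHm lemk].
  by exists 0; rewrite /mixval !big_geq_nil // (leq_trans ledm lemk).
case: (ltnP m k) => [ltmk|lekm]; last by exists 0; rewrite (@anti_leq k m) ?lekm.
rewrite (mixvalS _ ltmd); have [q ->] := IHm ltmk.
have /dvdnP[p ->] := radix_dvd ltmk.
by exists (f (Ordinal ltmd) * p + q); rewrite mulnDl mulnA addnA.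
Qed.

Lemma digit_mixval f m (k : 'I_d) : m <= k ->
  (forall l : 'I_d, k <= l -> f l < t l) -> digit (mixval f m) k = f k.
Proof.
move=> lemk flt; have [q ->] := mixval_split f lemk.
rewrite /digit (radixS (ltn_ord k)) (mixvalS f (ltn_ord k)).
have -> : Ordinal (ltn_ord k) = k by apply: val_inj.
have ltv : mixval f k.+1 < radix k.+1 by apply: mixval_lt_radix => l /ltnW; apply: flt.
rewrite mulnA addnA -mulnDl divnMDl ?radix_gt0 // divn_small // addn0.
by rewrite modnMDl modn_small ?flt.
Qed.

Lemma mixval_single (k : 'I_d) b m : m <= k ->
  mixval (fun l => if l == k then b else 0) m = b * radix k.+1.
Proof.
move=> lemk; rewrite /mixval (bigD1 k) //= eqxx big1 ?addn0 // => l /andP[_ /negbTE ->].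
by rewrite mul0n.
Qed.

End MixedRadix.

Section TensorAction.
Variables (F : fieldType) (d : nat) (n : 'I_d -> nat).
Implicit Types (g h : gtuple F n) (T : tensor F n).

Lemma glue_at i (a : 'I_(n i)) (c : oidx n i) : glue a c i = a.
Proof.
rewrite ffunE (reflect_match_true _ _ (erefl i)) // => x y.
by rewrite (eq_axiomK x) (eq_axiomK y).
Qed.

Lemma glue_off i (a : 'I_(n i)) (c : oidx n i) k (nki : k != i) :
  glue a c k = c (exist _ k nki).
Proof.
rewrite ffunE (reflect_match_false _ _ (elimN eqP nki)) => [|x y].
  all: by congr (c (exist _ _ _)); apply: bool_irrelevance.
Qed.

Definition coidx i (j : idx n) : oidx n i :=
  @finfun _ (fun k : {k : 'I_d | k != i} => 'I_(n (val k))) (fun k => j (val k)).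

Lemma glue_coidx i (j : idx n) : glue (j i) (coidx i j) = j.
Proof.
apply/ffunP => k; have [->|nki] := eqVneq k i; first exact: glue_at.
by rewrite (glue_off _ _ nki) ffunE.
Qed.

Lemma coidx_glue i (a : 'I_(n i)) (c : oidx n i) : coidx i (glue a c) = c.
Proof. by apply/ffunP => -[k nki]; rewrite ffunE /= (glue_off _ _ nki). Qed.

Lemma big_glue i (G : idx n -> F) :
  \sum_(j : idx n) G j = \sum_(a : 'I_(n i)) \sum_(c : oidx n i) G (glue a c).
Proof.
rewrite pair_big /= (reindex (fun p : 'I_(n i) * oidx n i => glue p.1 p.2)) //.
apply: onW_bij; exists (fun j : idx n => (j i, coidx i j)) => [[a c]|j] /=.
  by rewrite glue_at coidx_glue.
exact: glue_coidx.
Qed.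

Lemma act_comp g h T : act g (act h T) = act (fun i => g i *m h i) T.
Proof.
apply/ffunP => j; rewrite !ffunE.
under eq_bigr do rewrite ffunE mulr_sumr.
rewrite exchange_big /=; apply: eq_bigr => k _.
under eq_bigr do rewrite mulrA.
rewrite -mulr_suml; congr (_ * _).
under [RHS]eq_bigr do rewrite mxE.
rewrite -bigA_distr_dffun; apply: eq_bigr => l _.
by rewrite big_split.
Qed.

Lemma act1 T : act (fun i => 1%:M) T = T.
Proof.
apply/ffunP => j; rewrite ffunE (bigD1 j) //= [X in _ + X]big1 => [|k nkj].
  by rewrite big1 ?mul1r ?addr0 // => i _; rewrite mxE eqxx.
have [i nki] : exists i, j i != k i.
  apply/existsP; apply: contraR nkj; rewrite negb_exists => /forallP jk.
  by apply/eqP/ffunP => i; apply/esym/eqP/negPn; apply: jk.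
by rewrite (bigD1 i) //= mxE (negbTE nki) !mul0r.
Qed.

Lemma eq_act g h T : (forall i, g i = h i) -> act g T = act h T.
Proof.
move=> gh; apply/ffunP => j; rewrite !ffunE; apply: eq_bigr => k _.
by under eq_bigr do rewrite gh.
Qed.

Lemma actK g T : inG g -> act (fun i => invmx (g i)) (act g T) = T.
Proof. by move=> gG; rewrite act_comp -[RHS]act1; apply: eq_act => i; rewrite mulVmx. Qed.

Lemma inG_mul g h : inG g -> inG h -> inG (fun i => g i *m h i).
Proof. by move=> gG hG i; rewrite unitmx_mul gG hG. Qed.

Lemma inG_inv g : inG g -> inG (fun i => invmx (g i)).
Proof. by move=> gG i; rewrite unitmx_inv gG. Qed.

(* The transposed Kronecker product of the [g k], [k != i], in the column
   indexing of the mode-[i] flattening; [a0] only fills the unused [i]-th slot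
   of [glue]. *)
Definition kron_off g i (a0 : 'I_(n i)) : 'M[F]_#|{: oidx n i}| :=
  \matrix_(c', c) \prod_(l | l != i) g l (glue a0 (enum_val c) l) (glue a0 (enum_val c') l).

Lemma flattening_act g T i (a0 : 'I_(n i)) :
  flattening (act g T) i = g i *m flattening T i *m kron_off g a0.
Proof.
apply/matrixP => a c; rewrite !mxE ffunE (big_glue i).
under [RHS]eq_bigr do rewrite mxE big_distrl /=.
rewrite exchange_big /= (reindex (fun c' : 'I_#|{: oidx n i}| => enum_val c')) /=.
  2: exact/onW_bij/enum_val_bij.
apply: eq_bigr => c' _; apply: eq_bigr => b _.
rewrite (bigD1 i) //= !glue_at !mxE mulrAC; congr (_ * _ * _).
by apply: eq_bigr => l nli; rewrite !(glue_off _ _ nli).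
Qed.

Lemma kron_off1 g i (a0 : 'I_(n i)) :
  (forall l, l != i -> g l = 1%:M) -> kron_off g a0 = 1%:M.
Proof.
move=> g1; apply/matrixP => c' c; rewrite !mxE.
have [->|nc'c] := eqVneq c' c; first by rewrite big1 // => l nli; rewrite g1 // mxE eqxx.
have [[l nli] ncl] : exists k, enum_val c k != enum_val c' k.
  apply/existsP; apply: contraR nc'c; rewrite negb_exists => /forallP cc'.
  rewrite -(enum_valK c) -(enum_valK c'); apply/eqP; congr enum_rank.
  by apply/esym/ffunP => k; apply/eqP/negPn; apply: cc'.
by rewrite (bigD1 l) //= g1 // mxE !(glue_off _ _ nli) (negbTE ncl) mul0r.
Qed.

Lemma mrank_act_le g T i : (mrank (act g T) i <= mrank T i)%N.
Proof.
have [n0|/Ordinal a0] := posnP (n i).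
  by rewrite /mrank (leq_trans (rank_leq_row _)) // {1}n0.
rewrite /mrank (flattening_act g T a0).
exact: leq_trans (mxrankM_maxl _ _) (mxrankM_maxr _ _).
Qed.

Lemma mrank_act g T i : inG g -> mrank (act g T) i = mrank T i.
Proof.
move=> gG; apply/eqP; rewrite eqn_leq mrank_act_le /=.
by rewrite -{1}(actK T gG) mrank_act_le.
Qed.

Lemma flatteningE T i (j : idx n) : T j = flattening T i (j i) (enum_rank (coidx i j)).
Proof. by rewrite mxE enum_rankK glue_coidx. Qed.

Lemma flattening_inj T1 T2 i : flattening T1 i = flattening T2 i -> T1 = T2.
Proof. by move=> fl12; apply/ffunP => j; rewrite (flatteningE T1 i) fl12 -flatteningE. Qed.

Lemma mrank_le_support T i r :
  (forall j : idx n, (r <= j i)%N -> T j = 0) -> (mrank T i <= r)%N.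
Proof. by move=> T0; apply: mxrank_le_zero_rows => a c lera; rewrite mxE T0 ?glue_at. Qed.

Lemma mrank_ge_unit_minor T i r (rows : 'I_r -> 'I_(n i)) (cols : 'I_r -> oidx n i) :
  (forall b b', T (glue (rows b) (cols b')) = (b == b')%:R) -> (r <= mrank T i)%N.
Proof.
move=> Tbb; rewrite -[r in (r <= _)%N](mxrank1 F r).
have <- : mxsub rows (enum_rank \o cols) (flattening T i) = 1%:M.
  by apply/matrixP => b b'; rewrite !mxE enum_rankK Tbb.
exact: mxrank_mxsub.
Qed.

Definition single_mode i (M : 'M[F]_(n i)) : gtuple F n :=
  @dfwith _ (fun k => 'M[F]_(n k)) (fun k => 1%:M) i M.

Lemma single_mode_at i (M : 'M[F]_(n i)) : single_mode M i = M.
Proof. exact: dfwith_in. Qed.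

Lemma single_mode_off i (M : 'M[F]_(n i)) k : k != i -> single_mode M k = 1%:M.
Proof. by rewrite eq_sym; apply: dfwith_out. Qed.

Lemma inG_single_mode i (M : 'M[F]_(n i)) : M \in unitmx -> inG (single_mode M).
Proof.
move=> MU k; have [->|nki] := eqVneq k i; first by rewrite single_mode_at.
by rewrite single_mode_off ?unitmx1.
Qed.

Lemma flattening_act_single i (M : 'M[F]_(n i)) T :
  flattening (act (single_mode M) T) i = M *m flattening T i.
Proof.
apply/matrixP => a c; rewrite (flattening_act _ _ a) kron_off1 ?mulmx1.
  by rewrite single_mode_at.
exact: single_mode_off.
Qed.

End TensorAction.

Section StandardTensor.
Variables (F : fieldType) (d : nat) (n t : 'I_d -> nat) (i0 : 'I_d).
Hypotheses (t_gt0 : forall k, (0 < t k)%N) (t_le_n : forall k, (t k <= n k)%N).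
Hypotheses (i0_0 : val i0 = 0%N) (t_i0 : t i0 = radix t 1).
Local Notation Tstd := (Tstd F n t).

Lemma n_gt0 k : (0 < n k)%N.
Proof. exact: leq_trans (t_gt0 k) (t_le_n k). Qed.

Definition idx_of_nat (f : 'I_d -> nat) : idx n :=
  @finfun _ (fun k => 'I_(n k)) (fun k => insubd (Ordinal (n_gt0 k)) (f k)).

Lemma idx_of_natE f k : (f k < n k)%N -> idx_of_nat f k = f k :> nat.
Proof. by move=> lt_fn; rewrite ffunE val_insubd lt_fn. Qed.

Definition in_box (j : idx n) := [forall k, (k != i0) ==> (j k < t k)%N].

Lemma neq_i0 k : (k != i0) = (0 < k)%N.
Proof. by rewrite -val_eqE i0_0 lt0n. Qed.

Lemma iota_lexE (j : idx n) : iota_lex t j = mixval t (fun k => j k : nat) 1.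
Proof. by []. Qed.

Lemma TstdE (j : idx n) :
  Tstd j = if (j i0 == iota_lex t j :> nat) && in_box j then 1 else 0.
Proof.
rewrite ffunE; congr (if _ then _ else _).
apply/forallP/andP => [jP|[/eqP j0 /forallP jb] k].
  split; first by have := jP i0; rewrite i0_0 eqxx.
  apply/forallP => k; apply/implyP; rewrite neq_i0 lt0n => /negbTE k0.
  by have := jP k; rewrite k0.
have [k0|nk0] := eqVneq (val k) 0%N.
  have -> : k = i0 by apply: val_inj; rewrite k0 i0_0.
  exact/eqP.
by apply: (implyP (jb k)); rewrite neq_i0 lt0n.
Qed.

Lemma in_box_iota_lt (j : idx n) : in_box j -> (iota_lex t j < t i0)%N.
Proof.
move=> /forallP jb; rewrite t_i0; apply: mixval_lt_radix => k k_gt0.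
by apply: (implyP (jb k)); rewrite neq_i0.
Qed.

Lemma Tstd_support (j : idx n) k : (t k <= j k)%N -> Tstd j = 0.
Proof.
move=> le_tj; rewrite TstdE; case: ifP => // /andP[/eqP j0 jb]; exfalso.
have [ki0|nki0] := eqVneq k i0.
  by move: (in_box_iota_lt jb); rewrite -j0 -ki0 ltnNge le_tj.
by move: (implyP (forallP jb k) nki0); rewrite ltnNge le_tj.
Qed.

Lemma mrank_Tstd_le k : (mrank Tstd k <= t k)%N.
Proof. by apply: mrank_le_support => j; apply: Tstd_support. Qed.

(* The columns of the mode-[i0] flattening met by the support of [Tstd]:
   [boxcol b] carries the mixed-radix digits of [b]. *)
Definition boxcol (b : nat) : oidx n i0 := coidx i0 (idx_of_nat (digit t b)).

Lemma glue_boxcol (a : 'I_(n i0)) b k :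
  k != i0 -> glue a (boxcol b) k = digit t b k :> nat.
Proof.
move=> nki0; rewrite (glue_off _ _ nki0) ffunE /= idx_of_natE //.
exact: leq_trans (ltn_pmod _ (t_gt0 k)) (t_le_n k).
Qed.

Lemma in_box_boxcol (a : 'I_(n i0)) b : in_box (glue a (boxcol b)).
Proof. by apply/forallP => k; apply/implyP => nki0; rewrite glue_boxcol // ltn_pmod. Qed.

Lemma iota_lex_boxcol (a : 'I_(n i0)) b :
  iota_lex t (glue a (boxcol b)) = (b %% t i0)%N.
Proof.
rewrite iota_lexE t_i0 -mixval_digit; apply: eq_bigr => k k_gt0.
by rewrite glue_boxcol // neq_i0.
Qed.

Lemma in_box_glue_boxcol (a : 'I_(n i0)) c :
  in_box (glue a c) -> c = boxcol (iota_lex t (glue a c)).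
Proof.
move=> /forallP jb; apply/ffunP => -[k nki0]; apply: ord_inj.
have k_gt0 : (0 < k)%N by rewrite -neq_i0.
rewrite -(glue_off a c nki0) -(glue_off a (boxcol _) nki0) glue_boxcol //.
rewrite iota_lexE digit_mixval // => l le_kl.
by apply: (implyP (jb l)); rewrite neq_i0 (leq_trans k_gt0).
Qed.

Lemma boxcol_inj b b' :
  (b < t i0)%N -> (b' < t i0)%N -> boxcol b = boxcol b' -> b = b'.
Proof.
move=> ltb ltb' bb'; rewrite -(modn_small ltb) -(modn_small ltb').
by rewrite -!(iota_lex_boxcol (Ordinal (n_gt0 i0))) bb'.
Qed.

Lemma Tstd_glue_i0 (a : 'I_(n i0)) c :
  Tstd (glue a c) = if (a < t i0)%N && (c == boxcol a) then 1 else 0.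
Proof.
rewrite TstdE glue_at; congr (if _ then _ else _).
apply/andP/andP => [[/eqP a_iota jb]|[lt_a /eqP ->]].
  by rewrite a_iota in_box_iota_lt // -(in_box_glue_boxcol jb).
by rewrite iota_lex_boxcol modn_small // in_box_boxcol.
Qed.

Lemma Tstd_off_box (j : idx n) : ~~ in_box j -> Tstd j = 0.
Proof. by move=> /negbTE jb; rewrite TstdE jb andbF. Qed.

Lemma mrank_Tstd_ge_i0 : (t i0 <= mrank Tstd i0)%N.
Proof.
apply: (mrank_ge_unit_minor (rows := fun b => widen_ord (t_le_n i0) b)
  (cols := fun b => boxcol b)) => b b'.
rewrite Tstd_glue_i0 /= ltn_ord; have [<-|nbb'] := eqVneq b b'; first by rewrite eqxx.
case: eqP => // /esym /(boxcol_inj (ltn_ord b) (ltn_ord b')) /val_inj bb'.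
by rewrite bb' eqxx in nbb'.
Qed.

Lemma radix_weight_lt (k : 'I_d) b :
  (0 < k)%N -> (b < t k)%N -> (b * radix t k.+1 < n i0)%N.
Proof.
move=> k_gt0 ltb; apply: leq_trans (t_le_n i0); rewrite t_i0.
apply: (@leq_trans (radix t k)); last by rewrite dvdn_leq ?radix_gt0 ?radix_dvd.
rewrite (radixS t (ltn_ord k)) ltn_pmul2r ?radix_gt0 //.
by have -> : Ordinal (ltn_ord k) = k by apply: val_inj.
Qed.

Lemma mrank_Tstd_ge k : k != i0 -> (t k <= mrank Tstd k)%N.
Proof.
move=> nki0; have k_gt0 : (0 < k)%N by rewrite -neq_i0.
pose W := radix t k.+1.
pose diag (b : 'I_(t k)) l := if l == i0 then (b * W)%N else if l == k then val b else 0%N.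
apply: (mrank_ge_unit_minor (rows := fun b => widen_ord (t_le_n k) b)
  (cols := fun b => coidx k (idx_of_nat (diag b)))) => b b'.
set j := glue _ _.
have jE l : j l = (if l == k then val b else diag b' l) :> nat.
  have [->|nlk] := eqVneq l k; first by rewrite glue_at.
  rewrite (glue_off _ _ nlk) ffunE /= idx_of_natE /diag (negbTE nlk) //.
  by case: eqP => [->|_]; [apply: radix_weight_lt | apply: n_gt0].
have jb : in_box j.
  apply/forallP => l; apply/implyP => nli0; rewrite jE /diag (negbTE nli0).
  by case: eqP => [->|_]; [apply: ltn_ord | apply: t_gt0].
have iota_j : iota_lex t j = (b * W)%N.
  rewrite iota_lexE -(mixval_single t b k_gt0); apply: eq_bigr => l l_gt0.
  rewrite jE /diag; case: eqP => // /eqP nlk.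
  by rewrite ifN ?neq_i0 // (negbTE nlk).
have j_i0 : j i0 = (b' * W)%N :> nat by rewrite jE /diag ifN ?eqxx // eq_sym.
rewrite TstdE jb iota_j j_i0 andbT eqn_pmul2r ?radix_gt0 // (inj_eq (@ord_inj _)) eq_sym.
by case: (b == b'); rewrite ?mulr1n ?mulr0n.
Qed.

Lemma mrank_Tstd k : mrank Tstd k = t k.
Proof.
apply/eqP; rewrite eqn_leq mrank_Tstd_le.
by have [->|nki0] := eqVneq k i0; [exact: mrank_Tstd_ge_i0 | exact: mrank_Tstd_ge].
Qed.

Definition boxsel : 'M[F]_(t i0, #|{: oidx n i0}|) :=
  \matrix_(b, c) (enum_val c == boxcol b)%:R.

Lemma flattening_off_box (T : tensor F n) : (forall j, ~~ in_box j -> T j = 0) ->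
  flattening T i0 = (\matrix_(a, b) T (glue a (boxcol b))) *m boxsel.
Proof.
move=> T0; apply/matrixP => a c; rewrite !mxE.
under eq_bigr do rewrite !mxE.
have [box|nbox] := boolP (in_box (glue a (enum_val c))); last first.
  rewrite T0 // big1 // => b _; case: eqP => [cb|]; last by rewrite mulr0.
  by rewrite cb in_box_boxcol in nbox.
have cE := in_box_glue_boxcol box.
rewrite (bigD1 (Ordinal (in_box_iota_lt box))) //= big1 => [|b nbb0].
  by rewrite -cE eqxx mulr1 addr0.
case: eqP => [cb|]; last by rewrite mulr0.
have /(boxcol_inj (ltn_ord b) (in_box_iota_lt box)) bb0 :
    boxcol b = boxcol (iota_lex t (glue a (enum_val c))) by rewrite -cb.
by move: nbb0; rewrite -val_eqE /= bb0 eqxx.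
Qed.

Lemma flattening_Tstd_i0 : flattening Tstd i0 = pid_mx (t i0) *m boxsel.
Proof.
rewrite (flattening_off_box (@Tstd_off_box)); congr (_ *m _); apply/matrixP => a b.
rewrite !mxE Tstd_glue_i0; case: (ltnP a (t i0)) => [ltat|_]; last by rewrite andbF.
rewrite andbT; case: eqP => [/(boxcol_inj (ltn_ord b) ltat) ->|nbc]; first by rewrite eqxx.
by case: eqP => // ab; case: nbc; rewrite ab.
Qed.

Lemma box_reduction (T : tensor F n) : (forall k, mrank T k = t k) ->
  exists2 h : gtuple F n, inG h & forall j, ~~ in_box j -> act h T j = 0.
Proof.
move=> rkT; exists (fun k => invmx (col_ebase (flattening T k))).
  by move=> k; rewrite unitmx_inv col_ebase_unit.
move=> j; rewrite negb_forall => /existsP[k]; rewrite negb_imply -leqNgt => /andP[_ le_tj].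
rewrite (flatteningE _ k) (flattening_act _ _ (j k)) /=.
have rk : \rank (flattening T k) = t k := rkT k.
have -> : invmx (col_ebase (flattening T k)) *m flattening T k =
          pid_mx (t k) *m row_ebase (flattening T k).
  by rewrite -{2}(mulmx_ebase (flattening T k)) -!mulmxA mulKmx ?col_ebase_unit // rk.
by rewrite mxE big1 // => c _; rewrite pid_mx_mul_row0 ?mul0r.
Qed.

Lemma mrank_orbit_Tstd (T : tensor F n) : (forall k, mrank T k = t k) ->
  exists2 g : gtuple F n, inG g & T = act g Tstd.
Proof.
move=> rkT; have [h hG h0] := box_reduction rkT.
pose A : 'M[F]_(n i0, t i0) := \matrix_(a, b) act h T (glue a (boxcol b)).
have flatA : flattening (act h T) i0 = A *m boxsel := flattening_off_box h0.
have rkA : \rank A = t i0.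
  apply/eqP; rewrite eqn_leq rank_leq_col -{1}(rkT i0) -(mrank_act _ _ hG) /mrank flatA.
  exact: mxrankM_maxl.
have [g gU Ag] := col_full_pid_mx rkA.
exists (fun k => invmx (h k) *m single_mode g k).
  by apply: inG_mul; [apply: inG_inv | apply: inG_single_mode].
rewrite -act_comp -{1}(actK T hG); congr (act _ _); apply: (@flattening_inj _ _ _ _ _ i0).
by rewrite flattening_act_single flattening_Tstd_i0 flatA Ag mulmxA.
Qed.

End StandardTensor.

Theorem mainTheorem7 (d : nat) (n : 'I_d -> nat) (t : 'I_d -> nat)
  (hd : (3 <= d)%N) (hn : forall i, (2 <= n i)%N)
  (ht_pos : forall i, (0 < t i)%N) (ht_le : forall i, (t i <= n i)%N)
  (ht1 : forall i : 'I_d, val i = 0%N ->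
           t i = (\prod_(l : 'I_d | (0 < val l)%N) t l)%N) :
  (forall T1 T2 : tensor Rdefinitions.R n,
      (forall i, mrank T1 i = t i) -> (forall i, mrank T2 i = t i) ->
      exists g : gtuple Rdefinitions.R n, inG g /\ act g T1 = T2) /\
  (forall T : tensor Rdefinitions.R n,
      (forall i, mrank T i = t i) <->
      exists g : gtuple Rdefinitions.R n, inG g /\ T = act g (@Tstd Rdefinitions.R d n t)).
Proof.
have d_gt0 : (0 < d)%N by apply: leq_trans hd.
pose i0 := Ordinal d_gt0.
have t_i0 : t i0 = radix t 1 := ht1 i0 erefl.
have orbit := @mrank_orbit_Tstd Rdefinitions.R _ _ _ i0 ht_pos ht_le erefl t_i0.
split=> [T1 T2 rkT1 rkT2 | T].
  have [g1 g1G ->] := orbit T1 rkT1; have [g2 g2G ->] := orbit T2 rkT2.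
  exists (fun k => g2 k *m invmx (g1 k)); split; first exact: inG_mul (inG_inv g1G).
  by rewrite act_comp; apply: eq_act => k; rewrite mulmxKV.
split=> [/orbit[g gG ->] | [g [gG ->]] k]; first by exists g.
by rewrite mrank_act // (mrank_Tstd _ ht_pos ht_le (i0 := i0) erefl t_i0).
Qed.
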